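(* For every $l\in\mathbb N$, the curve $\Gamma_l=\{P_l(\lambda,\mu^2)=0\}$ intersects the line $\{\mu=0\}$ (in the projective plane containing $\mathbb C^2_{(\lambda,\mu)}$) exactly at the points with $\lambda$-abscissas $0,\ 1\cdot(l-1),\ 2(l-2),\ \dots,\ (l-1)\cdot 1$. All these intersection points are singular points of $\Gamma_l$, except for the points with abscissas $0$ and $\frac{l^2}{4}$ (the latter only when $l$ is even), which are regular points of $\Gamma_l$ at which $\Gamma_l$ intersects the line $\{\mu=0\}$ orthogonally.
   Context: For $l\in\mathbb N$ and $\mu\in\mathbb C$, $H_l$ is the tridiagonal $l\times l$ matrix with entries $H_{l;jj}=(1-j)(l-j+1)$, $H_{l;j,j+1}=\mu j$, $H_{l;j,j-1}=\mu(l-j+1)$, and $H_{l;ij}=0$ if $|i-j|\geq 2$; $\det(H_l+\lambda\,\mathrm{Id})$ is a polynomial of degree $l$ in $(\lambda,\mu^2)$, written $P_l(\lambda,\mu^2)$. *)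

From HB Require Import structures.
From mathcomp Require Import all_boot all_order all_algebra.
From mathcomp Require Import polyXY.
Set Implicit Arguments. Unset Strict Implicit. Unset Printing Implicit Defensive.
Import Order.TTheory GRing.Theory Num.Theory.
Local Open Scope ring_scope.

(* The l x l tridiagonal matrix H_l(mu).  Row/column index i : 'I_l
   corresponds to the paper's index j = i+1 (paper indices run 1..l). *)
Definition Hmat (R : comNzRingType) (l : nat) (mu : R) : 'M[R]_l :=
  \matrix_(i < l, j < l)
    let a : R := (i.+1)%:R in
    if i == j then (1 - a) * (l%:R - a + 1)
    else if (j : nat) == i.+1 then mu * a
    else if (i : nat) == j.+1 then mu * (l%:R - a + 1)
    else 0.

(* F_l(lambda, mu) = det(H_l(mu) + lambda Id) = P_l(lambda, mu^2), as a
   bivariate polynomial: outer variable 'X is lambda, inner variable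
   'Y = 'X%:P is mu.  Evaluation at (a, b) is F.[a, b]. *)
Definition Fl (C : numClosedFieldType) (l : nat) : {poly {poly C}} :=
  \det (Hmat l 'Y + 'X%:M).

Definition dlambda (C : fieldType) (F : {poly {poly C}}) : {poly {poly C}} :=
  F^`().
Definition dmu (C : fieldType) (F : {poly {poly C}}) : {poly {poly C}} :=
  map_poly (@deriv C) F.

Definition deg_term (C : fieldType) (F : {poly {poly C}}) (i : nat) : nat :=
  if F`_i != 0 then addn i (size F`_i).-1 else 0%N.
Definition tdeg (C : fieldType) (F : {poly {poly C}}) : nat :=
  \max_(i < size F) deg_term F i.

(* value at the homogeneous coordinates [x : y : z] of the homogenization
   z^d F(x/z, y/z) of F, d = total degree; its zero set is the projective
   closure of the affine curve {F = 0} *)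
Definition hom_eval (C : fieldType) (F : {poly {poly C}}) (x y z : C) : C :=
  \sum_(i < size F) \sum_(j < size F`_i)
     F`_i`_j * x ^+ i * y ^+ j * z ^+ (tdeg F - (i + j)).

Definition on_curve (C : fieldType) (F : {poly {poly C}}) (a b : C) : Prop :=
  F.[a, b] = 0.

Definition singular_pt (C : fieldType) (F : {poly {poly C}}) (a b : C) : Prop :=
  [/\ F.[a, b] = 0, (dlambda F).[a, b] = 0 & (dmu F).[a, b] = 0].

Definition regular_pt (C : fieldType) (F : {poly {poly C}}) (a b : C) : Prop :=
  F.[a, b] = 0 /\ ~ singular_pt F a b.

(* at a regular point (a,b) the tangent line of {F = 0} has direction
   vector (- dF/dmu, dF/dlambda); it is orthogonal to the line {mu = 0}
   (direction (1,0)) iff the dot product of the directions vanishes *)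
Definition meets_mu0_orthogonally (C : fieldType) (F : {poly {poly C}}) (a : C)
  : Prop :=
  regular_pt F a 0 /\ (- (dmu F).[a, 0]) * 1 + (dlambda F).[a, 0] * 0 = 0.

From HB Require Import structures.
From mathcomp Require Import all_boot all_order all_algebra.
From mathcomp Require Import polyXY perm.
From mathcomp Require Import ring zify.
Set Implicit Arguments. Unset Strict Implicit. Unset Printing Implicit Defensive.
Import Order.TTheory GRing.Theory Num.Theory.
Local Open Scope ring_scope.

(* At mu = 0 the matrix H_l is diagonal with entries -k(l-k), so
   F(lambda, 0) = prod_k (lambda - k(l-k)); as F has total degree l and its
   lambda^l coefficient is 1, the curve has no point at infinity on {mu = 0}.
   Conjugating H_l by diag((-1)^i) turns mu into -mu, so F is even in mu and
   dF/dmu vanishes on {mu = 0}.  Hence a point (k(l-k), 0) is singular iff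
   k(l-k) is a multiple root of F(lambda, 0), i.e. iff k(l-k) = j(l-j) for
   some j <> k, which fails exactly for k = 0 and 2k = l; at those simple
   roots the tangent is the vertical line {lambda = k(l-k)}. *)

Section TotalDegree.
Variable R : comNzRingType.
Implicit Types (F G : {poly {poly R}}) (m n : nat).

Definition total_deg_le n F := forall i j, (n < i + j)%N -> F`_i`_j = 0.

Lemma total_deg_le_mono m n F : (m <= n)%N -> total_deg_le m F -> total_deg_le n F.
Proof. by move=> mn hF i j ij; apply: hF; lia. Qed.

Lemma total_deg_le0 n : total_deg_le n 0.
Proof. by move=> i j _; rewrite !coef0. Qed.

Lemma total_deg_leD n F G :
  total_deg_le n F -> total_deg_le n G -> total_deg_le n (F + G).
Proof. by move=> hF hG i j ij; rewrite !coefD hF ?hG ?addr0. Qed.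

Lemma total_deg_leN n F : total_deg_le n F -> total_deg_le n (- F).
Proof. by move=> hF i j ij; rewrite !coefN hF ?oppr0. Qed.

Lemma total_deg_leMn n F k : total_deg_le n F -> total_deg_le n (F *+ k).
Proof. by move=> hF i j ij; rewrite !coefMn hF ?mul0rn. Qed.

Lemma total_deg_leM m n F G :
  total_deg_le m F -> total_deg_le n G -> total_deg_le (m + n) (F * G).
Proof.
move=> hF hG i j ij; rewrite coefM coef_sum big1 // => -[k hk] _ /=.
rewrite coefM big1 // => -[e he] _ /=.
have [kem|mke] := leqP (k + e) m; last by rewrite hF ?mul0r.
by rewrite (hG (i - k)%N (j - e)%N) ?mulr0 //; lia.
Qed.

Lemma total_deg_le1 : total_deg_le 0 1.
Proof. by case=> [|i] [|j] //= _; rewrite coef1 /= ?coef1 ?coef0. Qed.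

Lemma total_deg_le_nat n k : total_deg_le n k%:R.
Proof. exact/(total_deg_le_mono (leq0n n))/total_deg_leMn/total_deg_le1. Qed.

Lemma total_deg_leX : total_deg_le 1 'X.
Proof. by case=> [|[|i]] [|j] //= _; rewrite coefX /= ?coef1 ?coef0. Qed.

Lemma total_deg_leY : total_deg_le 1 'Y.
Proof. by case=> [|i] [|[|j]] //= _; rewrite coefC /= ?coefX ?coef0. Qed.

Lemma total_deg_le_det l (A : 'M[{poly {poly R}}]_l) :
  (forall i j, total_deg_le 1 (A i j)) -> total_deg_le l (\det A).
Proof.
move=> hA; apply: big_ind => [|F G|s _]; [exact: total_deg_le0|exact: total_deg_leD|].
apply: (@total_deg_leM 0).
  by case: odd_perm; [exact/total_deg_leN/total_deg_le1 | exact: total_deg_le1].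
rewrite -[X in total_deg_le X](card_ord l) cardE /index_enum -enumT.
elim: (enum 'I_l) => [|i r IH]; rewrite ?big_nil ?big_cons; first exact: total_deg_le1.
exact: (total_deg_leM (hA _ _) IH).
Qed.

End TotalDegree.

Section LineMu0.
Variable C : fieldType.
Implicit Types (F : {poly {poly C}}) (n : nat) (a x z : C).

Definition at_mu0 F : {poly C} := map_poly (horner_eval 0) F.

Lemma coef_at_mu0 F i : (at_mu0 F)`_i = F`_i`_0.
Proof. by rewrite coef_map /= horner_evalE horner_coef0. Qed.

Lemma horner2_at_mu0 F a : F.[a, 0] = (at_mu0 F).[a].
Proof. by rewrite /at_mu0 -{2}(hornerC a 0) horner_map. Qed.

Lemma dlambda_at_mu0 F a : (dlambda F).[a, 0] = (at_mu0 F)^`().[a].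
Proof. by rewrite /at_mu0 deriv_map -horner2_at_mu0. Qed.

Variables (n : nat) (F : {poly {poly C}}).
Hypotheses (degF : total_deg_le n F) (leadF : F`_n`_0 != 0).

Lemma size_total_deg : size F = n.+1.
Proof.
apply/anti_leq/andP; split; last first.
  by apply: contraNT leadF; rewrite -leqNgt => /(nth_default 0) ->; rewrite coef0.
apply/leq_sizeP => i ni; apply/polyP => j; rewrite coef0 degF //; lia.
Qed.

Lemma tdeg_total_deg : tdeg F = n.
Proof.
rewrite /tdeg size_total_deg; apply/anti_leq/andP; split.
  apply/bigmax_leqP => -[i ni] _ /=; rewrite /deg_term; case: ifP => // nzFi.
  rewrite leqNgt; apply: contraNN nzFi => ltn; rewrite -lead_coef_eq0 /lead_coef.
  by rewrite degF.
apply: leq_trans (leq_bigmax (Ordinal (ltnSn n))) => /=.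
rewrite /deg_term; have -> : F`_n != 0 by apply: contraNneq leadF => ->; rewrite coef0.
exact: leq_addr.
Qed.

Lemma hom_eval_mu0 x z :
  hom_eval F x 0 z = \sum_(i < n.+1) (at_mu0 F)`_i * x ^+ i * z ^+ (n - i).
Proof.
rewrite /hom_eval tdeg_total_deg size_total_deg; apply: eq_bigr => i _.
rewrite coef_at_mu0; have [Fi0|] := posnP (size F`_i).
  rewrite Fi0 big_ord0; move/eqP: Fi0; rewrite size_poly_eq0 => /eqP ->.
  by rewrite coef0 !mul0r.
move=> /prednK <-; rewrite big_ord_recl big1 ?addr0 ?expr0 ?mulr1 ?addn0 // => j _.
by rewrite expr0n /= mulr0 mul0r.
Qed.

Lemma hom_eval_mu0_infinity x : hom_eval F x 0 0 = F`_n`_0 * x ^+ n.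
Proof.
rewrite hom_eval_mu0 big_ord_recr big1 /= => [|i _].
  by rewrite add0r subnn mulr1 coef_at_mu0.
by rewrite expr0n subn_eq0 leqNgt ltn_ord mulr0.
Qed.

Lemma hom_eval_mu0_affine x z : z != 0 ->
  hom_eval F x 0 z = z ^+ n * (at_mu0 F).[x / z].
Proof.
move=> z0; rewrite hom_eval_mu0 horner_coef.
have -> : size (at_mu0 F) = n.+1.
  rewrite size_map_poly_id0 ?size_total_deg //.
  by rewrite /lead_coef size_total_deg horner_evalE horner_coef0.
rewrite mulr_sumr; apply: eq_bigr => -[i /= ilen] _.
rewrite -[in z ^+ n](subnK (ilen : (i <= n)%N)) exprD expr_div_n.
have zi : z ^+ i != 0 by rewrite expf_neq0.
by field.
Qed.
End LineMu0.

Lemma deriv_even_at0 (R : numDomainType) (p : {poly R}) :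
  p \Po (- 'X) = p -> p^`().[0] = 0.
Proof.
move=> /(congr1 (fun q => q^`().[0])) /=.
rewrite deriv_comp hornerM horner_comp derivN derivX !hornerE oppr0 mulrN1.
move=> h; have /eqP : p^`().[0] *+ 2 = 0 by rewrite mulr2n -{1}h addNr.
by rewrite mulrn_eq0 => /eqP.
Qed.

Lemma dmu_even_at_mu0 (C : numFieldType) (F : {poly {poly C}}) a :
  map_poly (comp_poly (- 'X)) F = F -> (dmu F).[a, 0] = 0.
Proof.
move=> evenF; rewrite horner2_at_mu0; suff -> : at_mu0 (dmu F) = 0 by rewrite horner0.
apply/polyP => i; rewrite coef_at_mu0 coef_map /= coef0 -horner_coef0.
by apply: deriv_even_at0; rewrite -{2}evenF coef_map.
Qed.

Section ProdXsubC.
Variables (R : idomainType) (I : finType) (r : I -> R).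
Let p := \prod_(i : I) ('X - (r i)%:P).

Lemma deriv_prod_XsubC_double_root j k :
  j != k -> r j = r k -> p^`().[r k] = 0.
Proof.
move=> jk rjk; rewrite /p (bigD1 k) //= (bigD1 j) //=.
rewrite mulrA derivM hornerD !hornerM derivM hornerD !hornerM !hornerXsubC rjk subrr.
by rewrite !(mulr0, mul0r, addr0).
Qed.

Lemma deriv_prod_XsubC_simple_root k :
  (forall j, r j = r k -> j = k) -> p^`().[r k] != 0.
Proof.
move=> simple; rewrite /p (bigD1 k) //= derivM hornerD !hornerM hornerXsubC subrr.
rewrite mul0r addr0 derivXsubC hornerC mul1r horner_prod.
apply/prodf_neq0 => j jk; rewrite hornerXsubC subr_eq0.
by apply: contraNneq jk => /esym/simple ->.
Qed.

End ProdXsubC.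

Definition abscissa {R : nzRingType} (l k : nat) : R := k%:R * (l%:R - k%:R).

Section Abscissa.
Variables (R : numFieldType) (l : nat).

Lemma abscissa_nat k : (k <= l)%N -> abscissa l k = (k * (l - k))%:R :> R.
Proof. by move=> kl; rewrite /abscissa natrM natrB. Qed.

Lemma abscissa_eq0 k : (k < l)%N -> (abscissa l k == 0 :> R) = (k == 0%N).
Proof.
by move=> kl; rewrite abscissa_nat ?(ltnW kl) // pnatr_eq0 muln_eq0 subn_eq0 leqNgt kl orbF.
Qed.

Lemma eq_abscissa i k : (i <= l)%N -> (k <= l)%N ->
  (abscissa l i == abscissa l k :> R) = (i == k) || (i + k == l)%N.
Proof.
move=> il kl; rewrite !abscissa_nat // eqr_nat.
apply/eqP/orP => [e|[]/eqP e]; [|by rewrite e|nia].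
have [ikl|ikl] := eqVneq (i + k)%N l; [right|left]; apply/eqP; nia.
Qed.

Lemma abscissa_eq_sqr_quarter k : (k <= l)%N ->
  (abscissa l k == (l ^ 2)%:R / 4 :> R) = (k.*2 == l).
Proof.
move=> kl; have n4 : (4 : R) != 0 by rewrite pnatr_eq0.
rewrite abscissa_nat // -[X in X == _]divr1 eqr_div ?oner_neq0 // mulr1 -natrM eqr_nat.
by apply/eqP/eqP; nia.
Qed.

End Abscissa.

Section Hmat.
Variables (R : comNzRingType) (l : nat).

Lemma det_Hmat_shiftN (mu x : R) :
  \det (Hmat l (- mu) + x%:M) = \det (Hmat l mu + x%:M).
Proof.
pose D : 'M[R]_l := diag_mx (\row_(i < l) (-1) ^+ i).
have DD : D *m D = 1%:M.
  apply/matrixP => i j; rewrite mul_diag_mx !mxE mulrnAr -exprD addnn.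
  by rewrite -signr_odd odd_double.
have conjD : D *m (Hmat l mu + x%:M) *m D = Hmat l (- mu) + x%:M.
  apply/matrixP => i j; rewrite mul_mx_diag mul_diag_mx !mxE mulrAC -exprD.
  have [<-|ij] := eqVneq i j; first by rewrite addnn -signr_odd odd_double mul1r.
  rewrite /= !mulr0n !addr0; case: eqP => [->|_]; last case: eqP => [->|_].
  - by rewrite addnS addnn -signr_odd /= odd_double expr1 mulNr mul1r mulNr.
  - by rewrite addSn addnn -signr_odd /= odd_double expr1 mulNr mul1r mulNr.
  - by rewrite mulr0.
by rewrite -conjD !det_mulmx mulrAC -det_mulmx DD det_scalar expr1n mul1r.
Qed.

Lemma Hmat0 : Hmat l (0 : R) = diag_mx (\row_(i < l) - abscissa l i).
Proof.
apply/matrixP => i j; rewrite !mxE /abscissa; case: (eqVneq i j) => [->|_].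
  by rewrite mulr1n -natr1; ring.
by rewrite mulr0n !mul0r !if_same.
Qed.

Lemma map_Hmat (S : comNzRingType) (f : {rmorphism R -> S}) mu :
  map_mx f (Hmat l mu) = Hmat l (f mu).
Proof.
apply/matrixP => i j; rewrite !mxE /=.
by case: ifP => _; [|case: ifP => _; [|case: ifP => _]];
  rewrite ?(rmorphM, rmorphB, rmorphD, rmorph_nat, rmorph1, rmorph0).
Qed.

End Hmat.

Section Fl.
Variables (C : numClosedFieldType) (l : nat).

Lemma total_deg_Fl : total_deg_le l (Fl C l).
Proof.
have cst n : total_deg_le 0 (n%:R : {poly {poly C}}) := @total_deg_le_nat _ 0 n.
have cstB n m : total_deg_le 0 (n%:R - m%:R + 1 : {poly {poly C}}) :=
  total_deg_leD (total_deg_leD (cst n) (total_deg_leN (cst m))) (total_deg_le1 _).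
apply: total_deg_le_det => i j; rewrite !mxE /=.
apply: total_deg_leD; last exact/total_deg_leMn/total_deg_leX.
case: ifP => _.
  apply: (total_deg_le_mono (leq0n 1)).
  exact: total_deg_leM (total_deg_leD (total_deg_le1 _) (total_deg_leN (cst _))) (cstB _ _).
case: ifP => _; first exact: total_deg_leM (total_deg_leY _) (cst _).
case: ifP => _; last exact: total_deg_le0.
exact: total_deg_leM (total_deg_leY _) (cstB _ _).
Qed.

Lemma at_mu0_Fl : at_mu0 (Fl C l) = \prod_(i < l) ('X - (abscissa l i)%:P).
Proof.
rewrite /at_mu0 /Fl -det_map_mx map_mxD map_Hmat map_scalar_mx /= map_polyX.
rewrite map_polyC /= horner_evalE hornerX Hmat0 -diag_const_mx -raddfD det_diag.
apply: eq_bigr => i _; rewrite !mxE addrC /abscissa.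
by rewrite !(rmorphM, rmorphB, rmorph_nat).
Qed.

Lemma Fl_lead : (Fl C l)`_l`_0 = 1.
Proof.
rewrite -coef_at_mu0 at_mu0_Fl.
have := lead_coef_prod_XsubC (index_enum 'I_l) predT (fun i : 'I_l => abscissa l i : C).
by rewrite /lead_coef size_prod_XsubC /index_enum -enumT size_enum_ord.
Qed.

Lemma Fl_even : map_poly (comp_poly (- 'X)) (Fl C l) = Fl C l.
Proof.
rewrite /Fl -det_map_mx map_mxD map_Hmat map_scalar_mx /= map_polyX.
by rewrite map_polyC /= comp_polyX polyCN det_Hmat_shiftN.
Qed.

End Fl.

Section Gamma.
Variables (C : numClosedFieldType) (l : nat).
Let F := Fl C l.

Lemma hom_eval_Fl_mu0_eq0 x z : (x != 0) || (z != 0) ->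
  hom_eval F x 0 z = 0 <->
  z != 0 /\ exists2 k : nat, (k < l)%N & x / z = abscissa l k.
Proof.
have degF := @total_deg_Fl C l.
have leadF : F`_l`_0 != 0 by rewrite Fl_lead oner_eq0.
have [-> | z0] := eqVneq z 0 => [|_].
  rewrite orbF => xz; rewrite (hom_eval_mu0_infinity degF leadF) Fl_lead mul1r.
  by split=> [/eqP|[]//]; rewrite expf_eq0 (negbTE xz) andbF.
rewrite (hom_eval_mu0_affine degF leadF) // at_mu0_Fl horner_prod; split.
  move/eqP; rewrite mulf_eq0 expf_eq0 (negbTE z0) andbF /=.
  move=> /prodf_eq0[k _]; rewrite hornerXsubC subr_eq0 => /eqP xzk.
  by split=> //; exists k.
case=> _ [k kl xzk]; apply/eqP; rewrite mulf_eq0 orbC; apply/orP; left.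
by apply/prodf_eq0; exists (Ordinal kl) => //; rewrite hornerXsubC xzk subrr.
Qed.

Lemma Fl_at_abscissa k : (k < l)%N -> F.[abscissa l k, 0] = 0.
Proof.
move=> kl; rewrite horner2_at_mu0 at_mu0_Fl horner_prod.
by apply/eqP/prodf_eq0; exists (Ordinal kl) => //; rewrite hornerXsubC subrr.
Qed.

Lemma Fl_abscissa_singular k : (0 < k)%N -> (k < l)%N -> k.*2 != l ->
  singular_pt F (abscissa l k) 0.
Proof.
move=> k0 kl k2; split; first exact: Fl_at_abscissa.
  have lkl : (l - k < l)%N by lia.
  rewrite dlambda_at_mu0 at_mu0_Fl.
  apply: (@deriv_prod_XsubC_double_root _ _ _ (Ordinal lkl) (Ordinal kl)).
    by rewrite -val_eqE /=; apply/eqP; lia.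
  apply/eqP; rewrite /= (@eq_abscissa C) ?leq_subr ?(ltnW kl) //.
  by rewrite subnK ?(ltnW kl) // eqxx orbT.
exact/dmu_even_at_mu0/Fl_even.
Qed.

Lemma Fl_abscissa_meets_mu0_orthogonally k : (k < l)%N ->
  (forall i, (i < l)%N -> abscissa l i = abscissa l k :> C -> i = k) ->
  meets_mu0_orthogonally F (abscissa l k).
Proof.
move=> kl simple; split.
  2: by rewrite (dmu_even_at_mu0 _ (@Fl_even C l)) oppr0 mul0r mulr0 addr0.
split; first exact: Fl_at_abscissa.
case=> _ + _; rewrite dlambda_at_mu0 at_mu0_Fl; apply/eqP.
apply: (@deriv_prod_XsubC_simple_root _ _ _ (Ordinal kl)) => i.
by move/(simple i (ltn_ord i)) => ik; apply: val_inj.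
Qed.

End Gamma.

Theorem proposition1p11 (C : numClosedFieldType) (l : nat) (hl : (0 < l)%N) :
  (* the projective closure of Gamma_l meets the line {mu = 0}, i.e. the
     points [x : 0 : z], exactly at the affine points with abscissas k(l-k) *)
  (forall x z : C, (x != 0) || (z != 0) ->
     (hom_eval (Fl C l) x 0 z = 0 <->
      (z != 0 /\ exists2 k : nat, (k < l)%N &
          x / z = k%:R * (l%:R - k%:R)))) /\
  (* singular / regular classification of these points *)
  (forall k : nat, (k < l)%N ->
     let a : C := k%:R * (l%:R - k%:R) in
     (a != 0 /\ ~ (~~ odd l /\ a = (l ^ 2)%:R / 4) -> singular_pt (Fl C l) a 0) /\
     (a = 0 \/ (~~ odd l /\ a = (l ^ 2)%:R / 4) ->
        meets_mu0_orthogonally (Fl C l) a)).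
Proof.
split=> [x z|k kl]; first exact: hom_eval_Fl_mu0_eq0.
rewrite /= -/(abscissa l k) (abscissa_eq0 _ kl).
have quarterE := abscissa_eq_sqr_quarter C (ltnW kl).
split=> [[k0 not_quarter]|k_special].
  apply: Fl_abscissa_singular; rewrite ?lt0n //; apply: contra_notN not_quarter => /eqP k2.
  by split; [rewrite -k2 odd_double | apply/eqP; rewrite quarterE k2].
apply: Fl_abscissa_meets_mu0_orthogonally => // i il /eqP.
rewrite (@eq_abscissa C) ?(ltnW il) ?(ltnW kl) // => /orP[]/eqP ik; first by [].
case: k_special => [/eqP|[_ /eqP]]; rewrite ?(abscissa_eq0 _ kl) ?quarterE => /eqP; lia.
Qed.
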